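(* Let $s=(x,y,u,v)\in\mathbb{R}^4$ and write $W^k(s)=(x^{(k)},y^{(k)},u^{(k)},v^{(k)})$. (i) If one of the following holds: 1) $s\in P_0$; 2) $s\in Q_4$ and there exists $k\ge0$ with $y^{(k)}v^{(k)}\neq0$; 3) $s\in\mathcal N$ and $W(s)\in P_0$; 4) $s\in\mathcal N_0$ and $W^2(s)\in P_0$; 5) $s\in\mathcal N_1$ and $W^2(s)\in P_0$ — then $\lim_{n\to\infty}W^n(s)=(0,0,0,0)$. (ii) If one of the following holds: a) $s\in F$; b) $s\in\mathcal N$ and $W(s)\in F$; c) $s\in\mathcal N_0$ and $W^2(s)\in F$; d) $s\in\mathcal N_1$ and $W^2(s)\in F$ — then $W^n(s)\to+\infty$ (at least one coordinate of $W^n(s)$ tends to $+\infty$).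
   Context: $W:\mathbb{R}^4\to\mathbb{R}^4$ is the map $W(x,y,u,v)=(x',y',u',v')$ with $x'=\tfrac12 xu+\tfrac14 yu$, $y'=\tfrac12 xv+\tfrac14 yu+\tfrac13 yv$, $u'=\tfrac12 xu+\tfrac12 xv+\tfrac14 yu+\tfrac13 yv$, $v'=\tfrac14 yu+\tfrac13 yv$. $W^k$ denotes the $k$-fold iterate ($W^0$ the identity). Sets: $P=\{(x,y,u,v): x,y,u,v\ge0\}$; $Q_4=\{(x,y,u,v)\in P: x+y+u+v\le4\}$; $\mathcal N=\{(x,y,u,v): x,y,u,v\le0\}$; $\mathcal N_0=\{(x,y,u,v): x\le0,y\le0,u\ge0,v\ge0\}$; $\mathcal N_1=\{(x,y,u,v): x\ge0,y\ge0,u\le0,v\le0\}$; $P_0=\{(x,y,u,v)\in P: (x+y)(u+v)<4\}$; $F=\{(x,y,u,v)\in P: x+y+u+v>4,\ \max\{\tfrac{xu}{4},\tfrac{yu}{16},\tfrac{yv}{9}\}>1\}$. *)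

From Stdlib Require Import Reals.
Open Scope R_scope.

Record pt : Type := mkpt { px : R; py : R; pu : R; pv : R }.

Definition W (s : pt) : pt :=
  let x := px s in let y := py s in let u := pu s in let v := pv s in
  mkpt (1/2 * x * u + 1/4 * y * u)
       (1/2 * x * v + 1/4 * y * u + 1/3 * y * v)
       (1/2 * x * u + 1/2 * x * v + 1/4 * y * u + 1/3 * y * v)
       (1/4 * y * u + 1/3 * y * v).

Fixpoint Witer (k : nat) (s : pt) : pt :=
  match k with
  | O => s
  | S k' => W (Witer k' s)
  end.

Definition inP (s : pt) : Prop := 0 <= px s /\ 0 <= py s /\ 0 <= pu s /\ 0 <= pv s.
Definition inQ4 (s : pt) : Prop := inP s /\ px s + py s + pu s + pv s <= 4.
Definition inN (s : pt) : Prop := px s <= 0 /\ py s <= 0 /\ pu s <= 0 /\ pv s <= 0.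
Definition inN0 (s : pt) : Prop := px s <= 0 /\ py s <= 0 /\ 0 <= pu s /\ 0 <= pv s.
Definition inN1 (s : pt) : Prop := 0 <= px s /\ 0 <= py s /\ pu s <= 0 /\ pv s <= 0.
Definition inP0 (s : pt) : Prop := inP s /\ (px s + py s) * (pu s + pv s) < 4.
Definition inF (s : pt) : Prop :=
  inP s /\ px s + py s + pu s + pv s > 4 /\
  Rmax (px s * pu s / 4) (Rmax (py s * pu s / 16) (py s * pv s / 9)) > 1.

Definition orbit_to_zero (s : pt) : Prop :=
  Un_cv (fun n => px (Witer n s)) 0 /\ Un_cv (fun n => py (Witer n s)) 0 /\
  Un_cv (fun n => pu (Witer n s)) 0 /\ Un_cv (fun n => pv (Witer n s)) 0.

Definition orbit_to_infty (s : pt) : Prop :=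
  cv_infty (fun n => px (Witer n s)) \/ cv_infty (fun n => py (Witer n s)) \/
  cv_infty (fun n => pu (Witer n s)) \/ cv_infty (fun n => pv (Witer n s)).

From Stdlib Require Import Reals Lra Lia Psatz.
Open Scope R_scope.

(** The quantity [T s = (x + y)(u + v)] drives everything.  On the orthant [P], which
    [W] preserves, [T s] is the coordinate sum of [W s], and
    [T (W s) = T s^2/4 - (y v)^2/36 <= T s^2/4].  Hence [T < 4] makes [T] decay
    geometrically along the orbit and drags all coordinates to 0; on [Q4] one has
    [T <= 4] forever, with strict inequality right after a step where [y v <> 0].
    On [F] one of [Q = xu/4, yu/16, yv/9] exceeds 1, and each of them satisfies
    [Q (W s) >= Q s^2] and [u (W s) >= Q s] on [P], so [u] grows at least
    geometrically.  The hypotheses involving [N], [N0], [N1] only say that the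
    orbit enters [P0] or [F] after one or two steps, and both limits ignore a
    finite prefix of the orbit. *)

Lemma Witer_add n k s : Witer (n + k) s = Witer n (Witer k s).
Proof. induction n as [|n IH]; simpl; [reflexivity | now rewrite IH]. Qed.

Lemma Witer_W n s : Witer n (W s) = W (Witer n s).
Proof. induction n as [|n IH]; simpl; [reflexivity | now rewrite IH]. Qed.

Lemma Un_cv_Witer_shift (f : pt -> R) k s l :
  Un_cv (fun n => f (Witer n (Witer k s))) l -> Un_cv (fun n => f (Witer n s)) l.
Proof.
  intros H. apply (CV_shift _ k). intros eps Heps.
  destruct (H eps Heps) as [N HN]. exists N. intros n Hn.
  rewrite Witer_add. now apply HN.
Qed.

Lemma cv_infty_Witer_shift (f : pt -> R) k s :
  cv_infty (fun n => f (Witer n (Witer k s))) -> cv_infty (fun n => f (Witer n s)).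
Proof.
  intros H M. destruct (H M) as [N HN]. exists (N + k)%nat. intros n Hn.
  replace n with (n - k + k)%nat by lia. rewrite Witer_add. apply HN. lia.
Qed.

Lemma orbit_to_zero_Witer k s : orbit_to_zero (Witer k s) -> orbit_to_zero s.
Proof.
  intros (Hx & Hy & Hu & Hv).
  repeat split; apply (Un_cv_Witer_shift _ k); assumption.
Qed.

Lemma orbit_to_infty_Witer k s : orbit_to_infty (Witer k s) -> orbit_to_infty s.
Proof.
  intros [H | [H | [H | H]]];
    [left | right; left | right; right; left | right; right; right];
    exact (cv_infty_Witer_shift _ k s H).
Qed.

Lemma Un_cv_0_geometric (f : nat -> R) C r :
  0 <= r < 1 -> (forall n, 0 <= f n <= C * r ^ n) -> Un_cv f 0.
Proof.
  intros Hr Hf eps Heps.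
  assert (HC : 0 <= C) by (specialize (Hf 0%nat); simpl in Hf; lra).
  assert (Heps' : 0 < eps / (C + 1)) by (apply Rdiv_lt_0_compat; lra).
  destruct (pow_lt_1_zero r ltac:(rewrite Rabs_pos_eq; lra) _ Heps') as [N HN].
  exists N. intros n Hn. unfold Rdist.
  specialize (HN n Hn). specialize (Hf n).
  rewrite Rabs_pos_eq in HN by (apply pow_le; lra).
  rewrite Rminus_0_r, Rabs_pos_eq by lra.
  assert (C * r ^ n <= C * (eps / (C + 1))) by (apply Rmult_le_compat_l; lra).
  replace (C * (eps / (C + 1))) with (eps - eps / (C + 1)) in * by (field; lra).
  lra.
Qed.

Lemma cv_infty_geometric (f : nat -> R) q :
  1 < q -> (forall n, q ^ n <= f n) -> cv_infty f.
Proof.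
  intros Hq Hf M.
  destruct (Pow_x_infinity q ltac:(rewrite Rabs_pos_eq; lra) (M + 1)) as [N HN].
  exists N. intros n Hn. specialize (HN n Hn). specialize (Hf n).
  rewrite Rabs_pos_eq in HN by (apply pow_le; lra).
  lra.
Qed.

Lemma quadratic_decay (a : nat -> R) c :
  0 < c -> a 0%nat <= c -> (forall n, 0 <= a n) ->
  (forall n, a (S n) <= a n ^ 2 / c) ->
  forall n, a n <= a 0%nat * (a 0%nat / c) ^ n.
Proof.
  intros Hc Ha0 Hpos Hrec. set (r := a 0%nat / c).
  pose proof (Hpos 0%nat).
  assert (Hr : 0 <= r <= 1).
  { unfold r, Rdiv. split; apply (Rmult_le_reg_r c); try lra;
      rewrite Rmult_assoc, Rinv_l; lra. }
  induction n as [|n IH]; [simpl; lra|].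
  assert (Hrn : r ^ n <= 1) by (rewrite <- (pow1 n); apply pow_incr; lra).
  assert (Han : a n <= a 0%nat) by (pose proof (pow_le r n (proj1 Hr)); nra).
  assert (a n ^ 2 / c <= a n * r).
  { unfold r, Rdiv. rewrite <- Rmult_assoc. apply Rmult_le_compat_r.
    - left. apply Rinv_0_lt_compat. lra.
    - specialize (Hpos n). nra. }
  specialize (Hrec n). specialize (Hpos n). simpl.
  pose proof (pow_le r n (proj1 Hr)). nra.
Qed.

Lemma squaring_growth (a : nat -> R) :
  1 <= a 0%nat -> (forall n, a n ^ 2 <= a (S n)) -> forall n, a 0%nat ^ S n <= a n.
Proof.
  intros Ha0 Hrec. induction n as [|n IH]; [simpl; lra|].
  assert (1 <= a 0%nat ^ n) by (apply pow_R1_Rle; lra).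
  assert (a 0%nat <= a n) by (simpl in IH; nra).
  specialize (Hrec n). change (a 0%nat ^ S (S n)) with (a 0%nat * a 0%nat ^ S n).
  nra.
Qed.

Lemma W_inP s : inP s -> inP (W s).
Proof.
  destruct s as [x y u v]. unfold inP, W. simpl. intros (Hx & Hy & Hu & Hv).
  repeat split; nra.
Qed.

Lemma Witer_inP n s : inP s -> inP (Witer n s).
Proof. intros HP. induction n as [|n IH]; simpl; auto using W_inP. Qed.

Definition tprod (s : pt) : R := (px s + py s) * (pu s + pv s).

Lemma tprod_nonneg s : inP s -> 0 <= tprod s.
Proof. unfold inP, tprod. intros (Hx & Hy & Hu & Hv). nra. Qed.

Lemma W_coord_sum s : px (W s) + py (W s) + pu (W s) + pv (W s) = tprod s.
Proof. destruct s. unfold tprod, W. simpl. field. Qed.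

Lemma tprod_W s : tprod (W s) = tprod s ^ 2 / 4 - (py s * pv s) ^ 2 / 36.
Proof. destruct s. unfold tprod, W. simpl. field. Qed.

Lemma tprod_W_le s : tprod (W s) <= tprod s ^ 2 / 4.
Proof. rewrite tprod_W. pose proof (pow2_ge_0 (py s * pv s)). lra. Qed.

Lemma tprod_le_4 s : inQ4 s -> tprod s <= 4.
Proof.
  unfold inQ4, inP, tprod. intros ((Hx & Hy & Hu & Hv) & Hsum).
  pose proof (pow2_ge_0 (px s + py s - pu s - pv s)). nra.
Qed.

Lemma tprod_le_4_Witer n s : inP s -> tprod s <= 4 -> tprod (Witer n s) <= 4.
Proof.
  intros HP H4. induction n as [|n IH]; simpl; [assumption|].
  pose proof (tprod_W_le (Witer n s)).
  pose proof (tprod_nonneg _ (Witer_inP n s HP)). nra.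
Qed.

Lemma tprod_W_lt_4 s : inP s -> tprod s <= 4 -> py s * pv s <> 0 -> tprod (W s) < 4.
Proof.
  intros HP H4 Hyv. rewrite tprod_W.
  pose proof (tprod_nonneg s HP).
  pose proof (Rlt_0_sqr _ Hyv). unfold Rsqr in *. nra.
Qed.

Lemma P0_orbit_to_zero s : inP0 s -> orbit_to_zero s.
Proof.
  intros [HP HT]. change (tprod s < 4) in HT.
  set (a n := tprod (Witer n s)).
  assert (Hpos : forall n, 0 <= a n) by (intro n; apply tprod_nonneg, Witer_inP, HP).
  assert (Hdecay : forall n, a n <= a 0%nat * (a 0%nat / 4) ^ n).
  { apply quadratic_decay; [lra | unfold a; simpl; lra | exact Hpos |].
    intro n. apply tprod_W_le. }
  assert (Hcoord : forall n, inP (Witer n (W s)) /\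
            px (Witer n (W s)) + py (Witer n (W s)) + pu (Witer n (W s))
            + pv (Witer n (W s)) <= a 0%nat * (a 0%nat / 4) ^ n).
  { intro n. rewrite Witer_W, W_coord_sum.
    split; [apply W_inP, Witer_inP, HP | apply Hdecay]. }
  assert (Hr : 0 <= a 0%nat / 4 < 1)
    by (pose proof (Hpos 0%nat); unfold a in *; simpl in *; split; lra).
  apply (orbit_to_zero_Witer 1).
  repeat split; apply (Un_cv_0_geometric _ (a 0%nat) _ Hr);
    intro n; change (Witer 1 s) with (W s);
    destruct (Hcoord n) as [(? & ? & ? & ?) ?]; lra.
Qed.

Lemma Q4_orbit_to_zero s k :
  inQ4 s -> py (Witer k s) * pv (Witer k s) <> 0 -> orbit_to_zero s.
Proof.
  intros HQ Hyv. assert (HP : inP s) by apply HQ.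
  apply (orbit_to_zero_Witer (S k)), P0_orbit_to_zero. split.
  - apply Witer_inP, HP.
  - apply (tprod_W_lt_4 (Witer k s)); [apply Witer_inP, HP | | exact Hyv].
    apply tprod_le_4_Witer; [exact HP | apply tprod_le_4, HQ].
Qed.

Lemma orbit_to_infty_of_squaring (Q : pt -> R) s :
  (forall s, inP s -> Q s ^ 2 <= Q (W s) /\ Q s <= pu (W s)) ->
  inP s -> 1 < Q s -> orbit_to_infty s.
Proof.
  intros HQ HP H1. apply (orbit_to_infty_Witer 1). right; right; left.
  apply (cv_infty_geometric _ (Q s) H1). intro n.
  assert (Hgrow : Q s ^ S n <= Q (Witer n s)).
  { apply (squaring_growth (fun n => Q (Witer n s))); [simpl; lra |].
    intro m. apply HQ, Witer_inP, HP. }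
  pose proof (Rle_pow (Q s) n (S n) ltac:(lra) ltac:(lia)).
  pose proof (proj2 (HQ _ (Witer_inP n s HP))).
  simpl Witer. rewrite Witer_W. lra.
Qed.

Lemma sq_le_mul c a b : 0 <= c -> c <= a -> c <= b -> c ^ 2 <= a * b.
Proof. intros. simpl. rewrite Rmult_1_r. apply Rmult_le_compat; lra. Qed.

Lemma xu_squaring s : inP s ->
  (px s * pu s / 4) ^ 2 <= px (W s) * pu (W s) / 4 /\ px s * pu s / 4 <= pu (W s).
Proof.
  destruct s as [x y u v]. unfold inP, W. simpl. intros (Hx & Hy & Hu & Hv).
  assert (0 <= x * u) by nra.
  pose proof (sq_le_mul (x * u / 2) (1/2*x*u + 1/4*y*u)
                (1/2*x*u + 1/2*x*v + 1/4*y*u + 1/3*y*v) ltac:(lra) ltac:(nra) ltac:(nra)).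
  split; nra.
Qed.

Lemma yu_squaring s : inP s ->
  (py s * pu s / 16) ^ 2 <= py (W s) * pu (W s) / 16 /\ py s * pu s / 16 <= pu (W s).
Proof.
  destruct s as [x y u v]. unfold inP, W. simpl. intros (Hx & Hy & Hu & Hv).
  assert (0 <= y * u) by nra.
  pose proof (sq_le_mul (y * u / 4) (1/2*x*v + 1/4*y*u + 1/3*y*v)
                (1/2*x*u + 1/2*x*v + 1/4*y*u + 1/3*y*v) ltac:(lra) ltac:(nra) ltac:(nra)).
  split; nra.
Qed.

Lemma yv_squaring s : inP s ->
  (py s * pv s / 9) ^ 2 <= py (W s) * pv (W s) / 9 /\ py s * pv s / 9 <= pu (W s).
Proof.
  destruct s as [x y u v]. unfold inP, W. simpl. intros (Hx & Hy & Hu & Hv).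
  assert (0 <= y * v) by nra.
  pose proof (sq_le_mul (y * v / 3) (1/2*x*v + 1/4*y*u + 1/3*y*v)
                (1/4*y*u + 1/3*y*v) ltac:(lra) ltac:(nra) ltac:(nra)).
  split; nra.
Qed.

Lemma Rmax_gt_cases z x y : z < Rmax x y -> z < x \/ z < y.
Proof.
  intros H. destruct (Rlt_or_le z x) as [Hx | Hx]; [now left|].
  destruct (Rlt_or_le z y) as [Hy | Hy]; [now right|].
  pose proof (Rmax_lub x y z Hx Hy). lra.
Qed.

Lemma F_orbit_to_infty s : inF s -> orbit_to_infty s.
Proof.
  intros (HP & _ & Hmax).
  destruct (Rmax_gt_cases _ _ _ Hmax) as [H | Hmax'];
    [| destruct (Rmax_gt_cases _ _ _ Hmax') as [H | H]].
  - exact (orbit_to_infty_of_squaring (fun s => px s * pu s / 4) s xu_squaring HP H).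
  - exact (orbit_to_infty_of_squaring (fun s => py s * pu s / 16) s yu_squaring HP H).
  - exact (orbit_to_infty_of_squaring (fun s => py s * pv s / 9) s yv_squaring HP H).
Qed.

Theorem theorem3p1 :
  (forall s : pt,
      (inP0 s
       \/ (inQ4 s /\ exists k : nat, py (Witer k s) * pv (Witer k s) <> 0)
       \/ (inN s /\ inP0 (W s))
       \/ (inN0 s /\ inP0 (Witer 2 s))
       \/ (inN1 s /\ inP0 (Witer 2 s))) ->
      orbit_to_zero s)
  /\
  (forall s : pt,
      (inF s
       \/ (inN s /\ inF (W s))
       \/ (inN0 s /\ inF (Witer 2 s))
       \/ (inN1 s /\ inF (Witer 2 s))) ->
      orbit_to_infty s).
Proof.
  split; intros s H.
  - destruct H as [H | [[HQ [k Hk]] | [[_ H] | [[_ H] | [_ H]]]]].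
    + now apply P0_orbit_to_zero.
    + exact (Q4_orbit_to_zero s k HQ Hk).
    + apply (orbit_to_zero_Witer 1). now apply P0_orbit_to_zero.
    + apply (orbit_to_zero_Witer 2). now apply P0_orbit_to_zero.
    + apply (orbit_to_zero_Witer 2). now apply P0_orbit_to_zero.
  - destruct H as [H | [[_ H] | [[_ H] | [_ H]]]].
    + now apply F_orbit_to_infty.
    + apply (orbit_to_infty_Witer 1). now apply F_orbit_to_infty.
    + apply (orbit_to_infty_Witer 2). now apply F_orbit_to_infty.
    + apply (orbit_to_infty_Witer 2). now apply F_orbit_to_infty.
Qed.
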